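(* The function $2^\omega\times\mathbf{K}\to[0;1]$, $(z,K)\mapsto\mathcal{D}^-_K(z)$, is of Baire class $2$ but not of Baire class $1$.
   Context: $2^{\omega}$ is the Cantor space; $N_s=\{x\in2^\omega:s\subset x\}$; $\mu$ is the coin-tossing measure, $\mu(N_s)=2^{-\mathrm{lh}(s)}$. $\mathbf{K}$ is the Polish space of compact subsets of $2^\omega$ with the Vietoris topology. $\mathcal{D}^-_K(z)=\liminf_{n\to\infty}\mu(K\cap N_{z\restriction n})/\mu(N_{z\restriction n})$. A function between metrizable spaces is of Baire class $\alpha$ if the preimage of every open set is in $\boldsymbol{\Sigma}^0_{\alpha+1}$. *)

From HB Require Import structures.
From mathcomp Require Import all_boot all_order all_algebra.
From mathcomp Require Import all_classical all_reals all_analysis.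

Set Implicit Arguments.
Unset Strict Implicit.
Unset Printing Implicit Defensive.

Import Order.TTheory GRing.Theory Num.Theory.
Import numFieldNormedType.Exports.

Local Open Scope classical_set_scope.
Local Open Scope ring_scope.

(* Sigma0 n A  <->  A is in boldface Sigma^0_n  (n >= 1; Sigma0 0 is empty).
   Sigma^0_1 = open sets; Sigma^0_{n+1} = countable unions of complements of
   Sigma^0_n sets (i.e. of Pi^0_n sets). *)
Fixpoint Sigma0 {T : topologicalType} (n : nat) (A : set T) : Prop :=
  match n with
  | 0 => False
  | n'.+1 =>
      if n' is 0 then open A
      else exists F : (set T)^nat,
             (forall i, Sigma0 n' (~` F i)) /\ A = \bigcup_i F i
  end.

Definition baire_class {X Y : topologicalType} (n : nat) (f : X -> Y) : Prop :=
  forall U : set Y, open U -> Sigma0 n.+1 (f @^-1` U).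

Definition restr (z : cantor_space) (n : nat) : seq bool := mkseq z n.

Definition cyl (s : seq bool) : set cantor_space :=
  [set x : cantor_space | restr x (size s) = s].

Definition cyl_opt (o : option (seq bool)) : set cantor_space :=
  if o is Some s then cyl s else set0.

Definition cyl_weight {R : realType} (o : option (seq bool)) : \bar R :=
  if o is Some s then ((2%:R ^- size s : R)%:E) else 0%E.

(* The coin-tossing (outer) measure: the Caratheodory outer measure generated
   by mu(N_s) = 2^-lh(s), i.e. the infimum of sum_i 2^-lh(s_i) over all
   countable (possibly finite) covers of A by basic cylinders N_{s_i}.
   It agrees with the coin-tossing measure on all Borel sets. It is always
   in [0,1] so we take its real value. *)
Definition mu {R : realType} (A : set cantor_space) : R :=
  fine (ereal_inf
    [set (\sum_(i <oo) (@cyl_weight R (t i)))%E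
       | t in [set t : nat -> option (seq bool) |
                 A `<=` \bigcup_i cyl_opt (t i)]]).

Definition lower_density {R : realType} (K : set cantor_space)
    (z : cantor_space) : R :=
  limn_inf (fun n => @mu R (K `&` cyl (restr z n)) / @mu R (cyl (restr z n))).

Record compact_set := CompactSet {
  cset :> set cantor_space;
  cset_compact : compact cset }.

HB.instance Definition _ := gen_eqMixin compact_set.
HB.instance Definition _ := gen_choiceMixin compact_set.

Definition vietoris_subbase (i : bool * set cantor_space) : set compact_set :=
  if i.1 then [set K : compact_set | (K : set cantor_space) `<=` i.2]
  else [set K : compact_set | (K : set cantor_space) `&` i.2 !=set0].

HB.instance Definition _ :=
  isSubBaseTopological.Build compact_set
    [set i : bool * set cantor_space | open i.2] vietoris_subbase.

Definition density_map {R : realType} (p : cantor_space * compact_set) : R :=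
  lower_density (p.2 : set cantor_space) p.1.

(* Write g_n(z, K) = μ(K ∩ N_{z|n}) / μ(N_{z|n}), so that D^-_K(z) = liminf_n g_n(z, K).
   Since μ(N_s) = 2^-lh(s) and μ is defined through covers by cylinders, a cover of
   K ∩ N_{z|n} of small mass still covers K' ∩ N_{z'|n} for (z', K') near (z, K), so each
   set {g_n < q} is open.  By compactness of K ∩ N_{z|n}, finite covers suffice in the
   definition of μ(K ∩ N_{z|n}), which makes each {g_n ≥ q} a G_δ set.  Approximating the
   liminf by rationals puts {D^- > a} and {D^- < b}, hence every preimage of an open set,
   in Σ^0_3.
   For the lower bound, x ↦ (0^ω, K_x) with K_x = {y | y = 0^ω or x(min{n | y n = 1}) = 1}
   is continuous, and D^- at (0^ω, K_x) is 1 when x is eventually 1 and at most 1/2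
   otherwise, because x n = 0 forces K_x ∩ N_{0^n} ⊆ N_{0^(n+1)}.  If D^- were of Baire
   class 1, the set of eventually-1 sequences and its complement would both be F_σ; as
   both are dense, this contradicts the Baire category theorem in 2^ω. *)

From HB Require Import structures.
From mathcomp Require Import all_boot all_order all_algebra.
From mathcomp Require Import all_classical all_reals all_analysis.
Import numFieldNormedType.Exports.
From mathcomp Require Import finmap borel_hierarchy lra.

Set Implicit Arguments.
Unset Strict Implicit.
Unset Printing Implicit Defensive.
Import Order.TTheory GRing.Theory Num.Theory.

Local Open Scope classical_set_scope.
Local Open Scope ring_scope.

(** * Cylinders in the Cantor space *)

Lemma compact_nested_closed {T : ptopologicalType} (F : nat -> set T) :
  compact [set: T] -> (forall n, closed (F n)) ->
  (forall m n, (m <= n)%N -> F n `<=` F m) -> (forall n, F n !=set0) ->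
  \bigcap_n F n !=set0.
Proof.
move=> cT cF decF neF; move: cT; rewrite compact_In0.
move=> /(_ nat setT (fun n => setT `&` F n)) [].
- by exists F.
- move=> D _; pose M := \max_(i <- D) i; have [z Fz] := neF M.
  exists z => i iD; split => //; apply: decF Fz.
  exact: (@leq_bigmax_seq _ (enum_fset D) xpredT id i iD isT).
- by move=> z Fz; exists z => n _; have [] := Fz n I.
Qed.

Section cylinders.
Implicit Types (z w : cantor_space) (s c : seq bool).

Lemma size_restr z n : size (restr z n) = n.
Proof. exact: size_mkseq. Qed.

Lemma nth_restr z n i : (i < n)%N -> nth false (restr z n) i = z i.
Proof. exact: nth_mkseq. Qed.

Lemma restrS z n : restr z n.+1 = rcons (restr z n) (z n).
Proof. exact: mkseqS. Qed.

Lemma take_restr z m n : (m <= n)%N -> take m (restr z n) = restr z m.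
Proof.
move=> mn; apply: (@eq_from_nth _ false); first by rewrite size_takel ?size_restr.
move=> i; rewrite size_takel ?size_restr // => im.
by rewrite nth_take // !nth_restr // (leq_trans im mn).
Qed.

Lemma cylP s z : cyl s z <-> forall i, (i < size s)%N -> z i = nth false s i.
Proof.
rewrite /cyl /=; split => [<- i|zs]; first by rewrite size_restr => /nth_restr.
apply: (@eq_from_nth _ false); rewrite size_restr // => i lti.
by rewrite nth_restr // zs.
Qed.

Lemma cyl_nth b s : cyl s (nth b s).
Proof. by apply/cylP => i; exact: set_nth_default. Qed.

Lemma cyl_restrE z w n : cyl (restr z n) w = (restr w n = restr z n).
Proof. by rewrite /cyl /= size_restr. Qed.

Lemma cyl_restr z n : cyl (restr z n) z.
Proof. by rewrite cyl_restrE. Qed.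

Lemma cyl_restr_nth z w n i : cyl (restr z n) w -> (i < n)%N -> w i = z i.
Proof. by move=> /cylP wz lti; rewrite wz ?size_restr ?nth_restr. Qed.

Lemma cyl_restr_le z w m n :
  (m <= n)%N -> cyl (restr z n) w -> cyl (restr z m) w.
Proof. by move=> mn; rewrite !cyl_restrE -!(take_restr _ mn) => ->. Qed.

Lemma cyl_subset s c z :
  cyl s z -> cyl c z -> (size c <= size s)%N -> cyl s `<=` cyl c.
Proof.
move=> zs zc cs w ws; rewrite /cyl /= in zs zc ws *.
by rewrite -(take_restr w cs) ws -zs take_restr.
Qed.

Lemma cyl_rcons s b : cyl (rcons s b) = cyl s `&` [set z | z (size s) = b].
Proof.
apply/seteqP; split => z; rewrite /cyl /= size_rcons restrS.
  by move=> /rcons_inj[].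
by move=> [-> ->].
Qed.

Lemma cantor_coord_open i b : open [set z : cantor_space | z i = b].
Proof.
have -> : [set z : cantor_space | z i = b] = proj i @^-1` [set b] by [].
by apply: open_comp; [move=> + _; exact: proj_continuous|exact: discrete_open].
Qed.

Lemma cantor_coord_closed i b : closed [set z : cantor_space | z i = b].
Proof.
have -> : [set z : cantor_space | z i = b] = ~` [set z | z i = ~~ b].
  by apply/seteqP; split => z /=; case: (z i); case: b.
exact/open_closedC/cantor_coord_open.
Qed.

Lemma cyl_open_closed s : open (cyl s) /\ closed (cyl s).
Proof.
elim/last_ind: s => [|s b [os cs]].
  have -> : cyl [::] = setT by apply/seteqP; split.
  by split; [exact: openT|exact: closedT].
rewrite cyl_rcons; split; first by apply: openI => //; exact: cantor_coord_open.
by apply: closedI => //; exact: cantor_coord_closed.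
Qed.

Lemma cyl_open s : open (cyl s).
Proof. by case: (cyl_open_closed s). Qed.

Lemma cyl_closed s : closed (cyl s).
Proof. by case: (cyl_open_closed s). Qed.

Lemma cyl_compact s : compact (cyl s).
Proof. exact: (subclosed_compact (@cyl_closed s) cantor_space_compact (@subsetT _ _)). Qed.

Lemma open_cyl_nbhs (U : set cantor_space) z :
  open U -> U z -> exists n, cyl (restr z n) `<=` U.
Proof.
move=> oU Uz; apply: contrapT => noncyl.
have [w Fw] : \bigcap_n (cyl (restr z n) `&` ~` U) !=set0.
  apply: compact_nested_closed cantor_space_compact _ _ _.
  - by move=> n; apply: closedI; [exact: cyl_closed|exact: open_closedC].
  - by move=> m n mn w [zw Uw]; split => //; apply: cyl_restr_le zw.
  - by move=> n; apply: nonsubset => zU; apply: noncyl; exists n.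
have wz : w = z by apply/funext => i; have [/cyl_restr_nth -> //] := Fw i.+1 I.
by have [_] := Fw 0%N I; rewrite wz.
Qed.

Lemma cyl_nbhs_open (A : set cantor_space) :
  (forall z, A z -> exists n, cyl (restr z n) `<=` A) -> open A.
Proof.
move=> Acyl; rewrite openE => z /Acyl [n zA].
by apply: filterS zA _; apply: open_nbhs_nbhs; split; [exact: cyl_open|exact: cyl_restr].
Qed.

End cylinders.

(** * Borel classes and the Vietoris topology *)

Section borel_classes.
Context {T : topologicalType}.
Implicit Types A B : set T.

Definition Gdelta_sigma A :=
  exists2 F : (set T)^nat, (forall i, Gdelta (F i)) & A = \bigcup_i F i.

Lemma bigcup_unpickle (J : countType) (F : J -> set T) :
  \bigcup_j F j = \bigcup_n (if choice.unpickle n is Some j then F j else set0).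
Proof.
apply/seteqP; split => [x [j _ Fx]|x [n _]].
  by exists (choice.pickle j) => //; rewrite choice.pickleK.
by case: (choice.unpickle n) => // j Fx; exists j.
Qed.

Lemma bigcap_unpickle (J : countType) (F : J -> set T) :
  \bigcap_j F j = \bigcap_n (if choice.unpickle n is Some j then F j else setT).
Proof.
apply/seteqP; split => [x Fx n _|x Fx j _].
  by case: (choice.unpickle n) => // j; exact: Fx.
by have := Fx (choice.pickle j) I; rewrite choice.pickleK.
Qed.

Lemma Gdelta_bigcap (J : countType) (F : J -> set T) :
  (forall j, Gdelta (F j)) -> Gdelta (\bigcap_j F j).
Proof.
move=> GF; have /choice[U /all_and2[oU FU]] : forall j, exists Uj : (set T)^nat,
    (forall k, open (Uj k)) /\ F j = \bigcap_k Uj k.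
  by move=> j; have [Uj oUj ->] := GF j; exists Uj.
have -> : \bigcap_j F j = \bigcap_(jk : J * nat) U jk.1 jk.2.
  apply/seteqP; split => [x Fx [j k] _|x Ux j _]; first by have := Fx j I; rewrite FU; apply.
  by rewrite FU => k _; exact: (Ux (j, k)).
rewrite bigcap_unpickle; eexists; last reflexivity.
by move=> n /=; case: (choice.unpickle n) => [[j k]|]; [exact: oU|exact: openT].
Qed.

Lemma Gdelta_setI A B : Gdelta A -> Gdelta B -> Gdelta (A `&` B).
Proof.
move=> GA GB; have -> : A `&` B = \bigcap_(b : bool) (if b then A else B).
  apply/seteqP; split => [x [Ax Bx] []//|x AB].
  by split; [exact: AB true I|exact: AB false I].
by apply: Gdelta_bigcap => -[].
Qed.

Lemma Gdelta_Gdelta_sigma A : Gdelta A -> Gdelta_sigma A.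
Proof. by exists (fun=> A) => //; rewrite bigcup_const. Qed.

Lemma Gdelta_sigma_set0 : Gdelta_sigma set0.
Proof. exact/Gdelta_Gdelta_sigma/open_Gdelta/open0. Qed.

Lemma Gdelta_sigma_bigcup (J : countType) (F : J -> set T) :
  (forall j, Gdelta_sigma (F j)) -> Gdelta_sigma (\bigcup_j F j).
Proof.
move=> GF; have /choice[G /all_and2[GG FG]] : forall j, exists Gj : (set T)^nat,
    (forall k, Gdelta (Gj k)) /\ F j = \bigcup_k Gj k.
  by move=> j; have [Gj GGj ->] := GF j; exists Gj.
have -> : \bigcup_j F j = \bigcup_(jk : J * nat) G jk.1 jk.2.
  apply/seteqP; split => [x [j _]|x [[j k] _ Gx]].
    by rewrite FG => -[k _ Gx]; exists (j, k).
  by exists j => //; rewrite FG; exists k.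
rewrite bigcup_unpickle; eexists; last reflexivity.
by move=> n /=; case: (choice.unpickle n) => [[j k]|]; [exact: GG|exact/open_Gdelta/open0].
Qed.

Lemma Gdelta_sigma_setI A B : Gdelta_sigma A -> Gdelta_sigma B -> Gdelta_sigma (A `&` B).
Proof.
move=> [F GF ->] [G GG ->].
have -> : \bigcup_i F i `&` \bigcup_i G i = \bigcup_(ij : nat * nat) (F ij.1 `&` G ij.2).
  apply/seteqP; split => [x [[i _ Fx] [j _ Gx]]|x [[i j] _ [Fx Gx]]]; first by exists (i, j).
  by split; [exists i|exists j].
by apply: Gdelta_sigma_bigcup => ij; exact/Gdelta_Gdelta_sigma/Gdelta_setI.
Qed.

Lemma Gdelta_sigma_Sigma0_3 A : Gdelta_sigma A -> Sigma0 3 A.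
Proof.
move=> [F GF ->]; exists F; split => // i; have [U oU ->] := GF i.
by exists (fun j => ~` U j); split; [move=> j; rewrite /= setCK|rewrite setC_bigcap].
Qed.

Lemma Sigma0_2_Fsigma A : Sigma0 2 A -> Fsigma A.
Proof. by move=> [F [oF ->]]; exists F => // i; rewrite -openC; exact: oF. Qed.

End borel_classes.

Lemma Fsigma_preimage {T U : topologicalType} (f : T -> U) (A : set U) :
  continuous f -> Fsigma A -> Fsigma (f @^-1` A).
Proof.
move=> cf [F cF ->]; exists (fun i => f @^-1` F i); last by rewrite preimage_bigcup.
by move=> i; apply: preimage_closed => // x _; exact: cf.
Qed.

Lemma open_from_rectangles {T U : topologicalType} (A : set (T * U)) :
  (forall p, A p -> exists P Q,
     [/\ open P, open Q, P p.1, Q p.2 & P `*` Q `<=` A]) -> open A.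
Proof.
move=> Arect; rewrite openE => p /Arect[P [Q [oP oQ Pp Qp PQA]]].
by exists (P, Q) => //; split; apply: open_nbhs_nbhs.
Qed.

Lemma vietoris_subbase_open (i : bool * set cantor_space) :
  open i.2 -> open (vietoris_subbase i).
Proof.
move=> oi; exists [set vietoris_subbase i]; first by move=> _ ->; exact: finI_from1.
by rewrite bigcup_set1.
Qed.

Lemma vietoris_continuous {T : topologicalType} (g : T -> compact_set) :
  (forall i, open i.2 -> open (g @^-1` vietoris_subbase i)) -> continuous g.
Proof.
move=> gsub; apply/continuousP => _ [D sD <-].
rewrite preimage_bigcup; apply: bigcup_open => _ /sD[F sF <-].
rewrite openE => x Fx; rewrite /interior preimage_bigcap.
apply: filter_bigI => i Fi; have oi : open i.2 by move: (sF i Fi); rewrite in_setE.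
by have := gsub i oi; rewrite openE; apply; exact: Fx.
Qed.

(** * The coin-tossing outer measure of cylinders *)

Section coin_tossing_measure.
Context {R : realType}.
Implicit Types (A C : set cantor_space) (s c : seq bool) (l : seq (seq bool)).
Implicit Types (t : nat -> option (seq bool)).

Definition cyl_mass s : R := 2%:R ^- size s.

Definition cyl_union l : set cantor_space := \bigcup_(c in [set` l]) cyl c.

Lemma cyl_mass_gt0 s : 0 < cyl_mass s.
Proof. by rewrite invr_gt0 exprn_gt0. Qed.

Lemma cyl_mass_ge0 s : 0 <= cyl_mass s.
Proof. exact/ltW/cyl_mass_gt0. Qed.

Lemma cyl_mass_rcons s b : cyl_mass (rcons s b) = cyl_mass s / 2.
Proof. by rewrite /cyl_mass size_rcons exprSr invfM. Qed.

Lemma cyl_mass_le s c : (size s <= size c)%N -> cyl_mass c <= cyl_mass s.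
Proof.
by move=> sc; rewrite lef_pV2 ?posrE ?exprn_gt0 // ler_eXn2l // ltr1n.
Qed.

Lemma cyl_mass_le_sum c l : c \in l -> cyl_mass c <= \sum_(d <- l) cyl_mass d.
Proof.
move=> cl; rewrite (big_rem c cl) /= lerDl.
by apply: sumr_ge0 => d _; exact: cyl_mass_ge0.
Qed.

Lemma cyl_union_closed l : closed (cyl_union l).
Proof. by rewrite /cyl_union bigcup_seq; apply: closed_bigsetU => c _; exact: cyl_closed. Qed.

Lemma cyl_opt_open o : open (cyl_opt o).
Proof. by case: o => [s|]; [exact: cyl_open|exact: open0]. Qed.

Lemma cyl_mass_le_cover_bounded k s l :
  (forall c, c \in l -> (size c <= size s + k)%N) -> cyl s `<=` cyl_union l ->
  cyl_mass s <= \sum_(c <- l) cyl_mass c.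
Proof.
(* Either a cylinder of the cover contains N_s, or every cylinder of the cover meeting N_s
   is longer than s, and the cover splits according to the bit at position lh(s). *)
elim: k s l => [|k IH] s l size_l cover.
all: have [[c cl [cs _]]|short] :=
  pselect (exists2 c, c \in l & (size c <= size s)%N /\ cyl s `<=` cyl c);
  [exact: le_trans (cyl_mass_le cs) (cyl_mass_le_sum cl)|].
all: have long : forall z c, cyl s z -> c \in l -> cyl c z -> (size s < size c)%N
  by move=> z c sz cl cz; rewrite ltnNge; apply/negP => cs; apply: short;
     exists c => //; split => //; exact: cyl_subset sz cz cs.
- have [c cl cz] := cover _ (cyl_nth false s).
  by have := size_l c cl; rewrite addn0 leqNgt (long _ _ (cyl_nth false s) cl cz).
- have half b : cyl_mass (rcons s b) <=
      \sum_(c <- l | nth false c (size s) == b) cyl_mass c.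
    rewrite -big_filter; apply: IH => [c|z].
      by rewrite mem_filter size_rcons addSnnS => /andP[_ /size_l].
    rewrite cyl_rcons => -[sz <-]; have [c cl cz] := cover _ sz.
    exists c; rewrite //= mem_filter cl andbT.
    by move/cylP: (cz) => -> //; exact: long sz cl cz.
  rewrite (bigID (fun c => nth false c (size s) == true)) /=.
  rewrite [X in _ + X](eq_bigl (fun c => nth false c (size s) == false)); last first.
    by move=> c /=; case: (nth false c (size s)).
  by rewrite (splitr (cyl_mass s)) -{1}(cyl_mass_rcons s true) -(cyl_mass_rcons s false) lerD.
Qed.

Lemma cyl_mass_le_cover s l :
  cyl s `<=` cyl_union l -> cyl_mass s <= \sum_(c <- l) cyl_mass c.
Proof.
apply: (@cyl_mass_le_cover_bounded (\max_(c <- l) size c)) => c cl.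
by rewrite (leq_trans _ (leq_addl _ _)) // (@leq_bigmax_seq _ l xpredT size c cl isT).
Qed.

Lemma cyl_weight_ge0 o : (0 <= @cyl_weight R o)%E.
Proof. by case: o => [s|] //=; rewrite lee_fin cyl_mass_ge0. Qed.

Lemma sum_pmap_cyl_weight (L : seq (option (seq bool))) :
  (\sum_(c <- pmap id L) cyl_mass c)%:E = (\sum_(o <- L) @cyl_weight R o)%E.
Proof.
elim: L => [|[c|] L IH]; first by rewrite !big_nil.
  by rewrite /= !big_cons EFinD IH.
by rewrite /= big_cons add0e.
Qed.

Lemma sum_cyl_union_series l :
  (\sum_(i <oo) @cyl_weight R (nth None (map Some l) i))%E =
  (\sum_(c <- l) cyl_mass c)%:E.
Proof.
rewrite (@nneseries_split R _ 0 (size l)); last by move=> k _; exact: cyl_weight_ge0.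
rewrite eseries0 ?adde0 => [|i]; last by rewrite add0n => il _; rewrite nth_default ?size_map.
have pmapK := @map_pK (option (seq bool)) (seq bool) id Some (fun c => erefl).
by rewrite add0n -[in RHS](pmapK l) sum_pmap_cyl_weight (big_nth None) size_map.
Qed.

Definition cover_masses A : set (\bar R) :=
  [set (\sum_(i <oo) cyl_weight (t i))%E
     | t in [set t | A `<=` \bigcup_i cyl_opt (t i)]].

Lemma cover_masses_union A l :
  A `<=` cyl_union l -> cover_masses A (\sum_(c <- l) cyl_mass c)%:E.
Proof.
move=> Al; exists (fun i => nth None (map Some l) i); last exact: sum_cyl_union_series.
move=> z /Al[c cl cz]; exists (index c l) => //.
by rewrite (nth_map [::]) ?index_mem // nth_index.
Qed.

Lemma cover_masses_inf_ge0 A : (0 <= ereal_inf (cover_masses A))%E.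
Proof.
apply/ereal_infP => _ [t _ <-].
by apply: nneseries_ge0 => n _ _; exact: cyl_weight_ge0.
Qed.

Lemma muE A : (mu A)%:E = ereal_inf (cover_masses A).
Proof.
rewrite /mu fineK // ge0_fin_numE ?cover_masses_inf_ge0 //.
apply: (@le_lt_trans _ _ (\sum_(c <- [:: [::]]) cyl_mass c)%:E); last exact: ltey.
by apply/ereal_inf_lbound/cover_masses_union => z _; exists [::]; rewrite //= mem_head.
Qed.

Lemma mu_ge0 A : 0 <= @mu R A.
Proof. exact/fine_ge0/cover_masses_inf_ge0. Qed.

Lemma mu_le_cover A t : A `<=` \bigcup_i cyl_opt (t i) ->
  ((mu A)%:E <= \sum_(i <oo) @cyl_weight R (t i))%E.
Proof. by move=> At; rewrite muE; apply: ereal_inf_lbound; exists t. Qed.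

Lemma mu_le_union A l : A `<=` cyl_union l -> mu A <= \sum_(c <- l) cyl_mass c.
Proof. by move=> Al; rewrite -lee_fin muE; exact/ereal_inf_lbound/cover_masses_union. Qed.

Lemma mu_le_cyl A s : A `<=` cyl s -> mu A <= cyl_mass s.
Proof.
move=> As; have := @mu_le_union A [:: s]; rewrite big_seq1; apply.
by move=> z /As sz; exists s; rewrite //= mem_head.
Qed.

Lemma mu_cover_approx A (e : R) : 0 < e -> exists t,
  A `<=` \bigcup_i cyl_opt (t i) /\ (\sum_(i <oo) cyl_weight (t i) < (mu A + e)%:E)%E.
Proof.
move=> e0; have : (ereal_inf (cover_masses A) < (mu A + e)%:E)%E by rewrite -muE lte_fin ltrDl.
by move=> /ereal_inf_lt[_ [t At <-] lt]; exists t.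
Qed.

Lemma compact_cyl_subcover C t : compact C -> C `<=` \bigcup_i cyl_opt (t i) ->
  exists l, C `<=` cyl_union l /\
    ((\sum_(c <- l) cyl_mass c)%:E <= \sum_(i <oo) @cyl_weight R (t i))%E.
Proof.
move=> cC Ct; have [D _ CD] : finite_subset_cover setT (fun i => cyl_opt (t i)) C.
  move: cC; rewrite compact_cover; apply => [i _|z /Ct[i _ tz]]; last by exists i.
  exact: cyl_opt_open.
pose N := (\max_(i <- D) i).+1.
exists (pmap id (map t (iota 0 N))); split.
  move=> z /CD[i iD]; case ti : (t i) => [c|] // cz; exists c => //.
  rewrite /mkset mem_pmap map_id -ti map_f // mem_iota /= ltnS.
  exact: (@leq_bigmax_seq _ (enum_fset D) xpredT id i iD isT).
rewrite sum_pmap_cyl_weight big_map -{1}(subn0 N).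
apply: le_trans (@nneseries_lim_ge R _ xpredT 0 N _); first exact: lexx.
by move=> n _ _; exact: cyl_weight_ge0.
Qed.

Lemma le_mu_compact C (r : R) : compact C ->
  (forall l, C `<=` cyl_union l -> r <= \sum_(c <- l) cyl_mass c) -> r <= mu C.
Proof.
move=> cC rle; rewrite leNgt; apply/negP => muCr.
have := @mu_cover_approx C (r - mu C); rewrite subr_gt0 addrC subrK.
move=> /(_ muCr)[t [Ct tlt]]; have [l [Cl lle]] := compact_cyl_subcover cC Ct.
by have := le_lt_trans lle tlt; rewrite lte_fin ltNge rle.
Qed.

Lemma mu_cyl s : mu (cyl s) = cyl_mass s.
Proof.
apply/eqP; rewrite eq_le mu_le_cyl //.
by apply: le_mu_compact; [exact: cyl_compact|move=> l; exact: cyl_mass_le_cover].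
Qed.

End coin_tossing_measure.

Section limn_inf_bounded.
Context {R : realType}.
Variable u : R^nat.
Hypothesis u_bounded : bounded_fun u.

Let u_lbound m : has_lbound (sdrop u m).
Proof. exact/has_lbound_sdrop/bounded_fun_has_lbound. Qed.

Lemma infs_le m n : (m <= n)%N -> infs u m <= u n.
Proof. by move=> mn; apply: ge_inf; [exact: u_lbound|exists n]. Qed.

Lemma lt_limn_infP (a : R) : a < limn_inf u <->
  exists q : rat, a < ratr q /\ exists m, forall n, (m <= n)%N -> ratr q <= u n.
Proof.
rewrite limn_infE //; split.
- move=> /sup_gt[|_ [m _ <-] /rat_in_itvoo[q]]; first by exists (infs u 0); exists 0%N.
  rewrite in_itv /= => /andP[aq qm]; exists q; split => //; exists m => n mn.
  exact: le_trans (ltW qm) (infs_le mn).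
- move=> [q [aq [m qu]]]; apply: (lt_le_trans aq); apply: (@le_trans _ _ (infs u m)).
    apply: lb_le_inf; first by exists (u m); exists m => /=.
    by move=> _ [n /= mn <-]; exact: qu.
  by apply: ub_le_sup; [exact: bounded_fun_has_ubound_infs|exists m].
Qed.

Lemma limn_inf_ltP (b : R) : limn_inf u < b <->
  exists q : rat, ratr q < b /\ forall m, exists2 n, (m <= n)%N & u n < ratr q.
Proof.
rewrite limn_infE //; split.
- move=> /rat_in_itvoo[q]; rewrite in_itv /= => /andP[supq qb].
  exists q; split => // m; have : infs u m < ratr q.
    apply: le_lt_trans supq; apply: ub_le_sup; last by exists m.
    exact: bounded_fun_has_ubound_infs.
  by move=> /inf_lt[|_ [n /= mn <-] unq]; [exists (u m); exists m => /=|exists n].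
- move=> [q [qb qu]]; apply: le_lt_trans qb; apply: ge_sup => [|_ [m _ <-]].
    by exists (infs u 0); exists 0%N.
  by have [n mn unq] := qu m; exact: le_trans (infs_le mn) (ltW unq).
Qed.

Lemma limn_inf_le (b : R) :
  (forall m, exists2 n, (m <= n)%N & u n <= b) -> limn_inf u <= b.
Proof.
move=> ub; rewrite leNgt; apply/negP => /lt_limn_infP[q [bq [m qu]]].
by have [n mn unb] := ub m; have := le_lt_trans unb bq; rewrite ltNge qu.
Qed.

End limn_inf_bounded.

Lemma limn_inf_eventually_cst {R : realType} (u : R^nat) (c : R) :
  (exists m, forall n, (m <= n)%N -> u n = c) -> limn_inf u = c.
Proof.
move=> [m uc]; apply: (cvg_limn_inf_sup _).1; apply: cvg_near_cst.
by exists m => // n /= mn; exact: uc.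
Qed.

(** * The lower density is of Baire class 2 *)

Local Notation X := (cantor_space * compact_set)%type.

Section density_baire_class_2.
Context {R : realType}.

Definition local_set n (p : X) : set cantor_space :=
  (p.2 : set cantor_space) `&` cyl (restr p.1 n).

Definition density_ratio n (p : X) : R := mu (local_set n p) / mu (cyl (restr p.1 n)).

Lemma density_mapE (p : X) : density_map p = limn_inf (density_ratio ^~ p).
Proof. by []. Qed.

Lemma density_ratioE n (p : X) :
  density_ratio n p = mu (local_set n p) / cyl_mass (restr p.1 n).
Proof. by rewrite /density_ratio mu_cyl. Qed.

Lemma local_set_compact n (p : X) : compact (local_set n p).
Proof. by apply: compact_closedI; [exact: cset_compact|exact: cyl_closed]. Qed.

Lemma local_setE n (z : cantor_space) (K : compact_set) w :
  cyl (restr z n) w -> local_set n (w, K) = (K : set cantor_space) `&` cyl (restr z n).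
Proof. by rewrite cyl_restrE => wz; rewrite /local_set /= wz. Qed.

Lemma density_ratio_bounded (p : X) : bounded_fun (density_ratio ^~ p).
Proof.
apply/ex_bound; first exact: (@globally_properfilter _ _ 0%N).
exists 1 => n _ /=.
rewrite density_ratioE ger0_norm ?divr_ge0 ?mu_ge0 ?cyl_mass_ge0 //.
by rewrite ler_pdivrMr ?cyl_mass_gt0 // mul1r; apply: mu_le_cyl => y [].
Qed.

Lemma density_ratio_lt_open n (q : R) : open [set p : X | density_ratio n p < q].
Proof.
apply: open_from_rectangles => -[z K]; set s := restr z n.
rewrite /= density_ratioE ltr_pdivrMr ?cyl_mass_gt0 // => muq.
have := @mu_cover_approx R (local_set n (z, K)) (q * cyl_mass s - mu (local_set n (z, K))).
rewrite subr_gt0 addrC subrK => /(_ muq)[t [Kt tq]].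
exists (cyl s), (vietoris_subbase (true, \bigcup_i cyl_opt (t i) `|` ~` cyl s)); split.
- exact: cyl_open.
- apply/vietoris_subbase_open/openU; last exact/closed_openC/cyl_closed.
  by apply: bigcup_open => i _; exact: cyl_opt_open.
- exact: cyl_restr.
- by move=> y Ky; have [sy|] := pselect (cyl s y); [left; apply: Kt|right].
- move=> [w K'] [/= sw K't]; rewrite density_ratioE /= ltr_pdivrMr ?cyl_mass_gt0 //.
  move: sw (sw); rewrite {1}cyl_restrE => -> /local_setE ->.
  rewrite -lte_fin; apply: le_lt_trans tq; apply: mu_le_cover => y [/K't[] //].
Qed.

Lemma density_ratio_ge_Gdelta n (q : R) : Gdelta [set p : X | q <= density_ratio n p].
Proof.
pose U l := [set p : X | ~ (local_set n p `<=` cyl_union l) \/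
                         q * cyl_mass (restr p.1 n) <= \sum_(c <- l) cyl_mass c].
have -> : [set p | q <= density_ratio n p] = \bigcap_l U l.
  apply/seteqP; split => p; rewrite /= density_ratioE ler_pdivlMr ?cyl_mass_gt0 //.
    move=> qmu l _; have [pl|] := pselect (local_set n p `<=` cyl_union l); last by left.
    by right; exact: le_trans qmu (mu_le_union pl).
  move=> pU; apply: le_mu_compact; first exact: local_set_compact.
  by move=> l pl; have [] := pU l I.
apply: Gdelta_bigcap => l; apply/open_Gdelta/open_from_rectangles => -[z K].
set s := restr z n; move=> /= [/existsNP[y /not_implyP[py nly]]|le].
- exists (cyl s), (vietoris_subbase (false, cyl s `&` ~` cyl_union l)); split.
  + exact: cyl_open.
  + apply/vietoris_subbase_open/openI; first exact: cyl_open.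
    exact/closed_openC/cyl_union_closed.
  + exact: cyl_restr.
  + by case: py => Ky sy; exists y.
  + move=> [w K'] [/= sw [y' [K'y' [sy' ly']]]]; left; rewrite (local_setE _ sw).
    by move=> /(_ y' (conj K'y' sy')).
- exists (cyl s), setT; split; [exact: cyl_open|exact: openT|exact: cyl_restr|by []|].
  by move=> [w K'] [/= sw _]; right; move: sw; rewrite cyl_restrE => ->.
Qed.

Lemma density_gt_Gdelta_sigma (a : R) : Gdelta_sigma [set p : X | a < density_map p].
Proof.
have -> : [set p : X | a < density_map p] = \bigcup_(qm : rat * nat)
    if a < ratr qm.1 then \bigcap_k [set p | ratr qm.1 <= density_ratio (qm.2 + k) p]
    else set0.
  apply/seteqP; split => p; rewrite /= density_mapE.
    move=> /lt_limn_infP-/(_ (density_ratio_bounded p))[q [aq [m qp]]].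
    by exists (q, m) => //=; rewrite aq => k _; apply: qp; exact: leq_addr.
  move=> [[q m] _] /=; case: ifP => // aq qp.
  apply/lt_limn_infP; first exact: density_ratio_bounded.
  by exists q; split => //; exists m => n /subnKC <-; exact: qp.
apply: Gdelta_sigma_bigcup => -[q m] /=; case: ifP => _; last exact: Gdelta_sigma_set0.
by apply/Gdelta_Gdelta_sigma/Gdelta_bigcap => k; exact: density_ratio_ge_Gdelta.
Qed.

Lemma density_lt_Gdelta_sigma (b : R) : Gdelta_sigma [set p : X | density_map p < b].
Proof.
have -> : [set p : X | density_map p < b] = \bigcup_(q : rat)
    if ratr q < b then \bigcap_m \bigcup_k [set p | density_ratio (m + k) p < ratr q]
    else set0.
  apply/seteqP; split => p; rewrite /= density_mapE.
    move=> /limn_inf_ltP-/(_ (density_ratio_bounded p))[q [qb qp]].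
    exists q => //=; rewrite qb => m _; have [n mn pq] := qp m.
    by exists (n - m)%N => //; rewrite subnKC.
  move=> [q _] /=; case: ifP => // qb qp.
  apply/limn_inf_ltP; first exact: density_ratio_bounded.
  by exists q; split => // m; have [k _ pq] := qp m I; exists (m + k)%N; rewrite ?leq_addr.
apply: Gdelta_sigma_bigcup => q /=; case: ifP => _; last exact: Gdelta_sigma_set0.
apply/Gdelta_Gdelta_sigma/Gdelta_bigcap => m; apply/open_Gdelta/bigcup_open => k _.
exact: density_ratio_lt_open.
Qed.

Lemma open_rat_itv (U : set R) x : open U -> U x ->
  exists a b : rat, [/\ ratr a < x, x < ratr b & `]ratr a, ratr b[ `<=` U].
Proof.
move=> oU Ux; have : nbhs x U by exact: open_nbhs_nbhs.
rewrite -nbhs_ballE => -[_/posnumP[r] xrU].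
have [a] : exists a : rat, ratr a \in `]x - r%:num, x[ by apply: rat_in_itvoo; rewrite gtrBl.
have [b] : exists b : rat, ratr b \in `]x, x + r%:num[ by apply: rat_in_itvoo; rewrite ltrDl.
rewrite !in_itv /= => /andP[xb br] /andP[ra ax]; exists a, b; split => // y.
rewrite /= in_itv /= => /andP[ay yb]; apply: xrU; rewrite /ball /= ltr_distlC.
by rewrite (lt_trans ra ay) (lt_trans yb br).
Qed.

Lemma density_map_baire_class2 : baire_class (X := X) 2 (@density_map R).
Proof.
move=> U oU; apply: Gdelta_sigma_Sigma0_3.
have -> : @density_map R @^-1` U = \bigcup_(ab : rat * rat)
    if `[< `]ratr ab.1, ratr ab.2[ `<=` U >] then
      [set p : X | ratr ab.1 < @density_map R p] `&` [set p | @density_map R p < ratr ab.2]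
    else set0.
  apply/seteqP; split => p /=.
    move=> /(open_rat_itv oU)[a [b [ap pb abU]]].
    by exists (a, b) => //=; case: asboolP.
  move=> [[a b] _] /=; case: asboolP => // abU [ap pb].
  by apply: abU; rewrite /= in_itv /= ap pb.
apply: Gdelta_sigma_bigcup => -[a b] /=; case: asboolP => _.
  exact: Gdelta_sigma_setI (density_gt_Gdelta_sigma _) (density_lt_Gdelta_sigma _).
exact: Gdelta_sigma_set0.
Qed.

End density_baire_class_2.

(** * The lower density is not of Baire class 1 *)

Lemma cantor_baire (C : nat -> set cantor_space) :
  (forall k, closed (C k)) -> (forall k, dense (~` C k)) -> exists y, forall k, ~ C k y.
Proof.
move=> cC dC; have /choice[f fC] : forall ks : nat * seq bool,
    exists c, cyl c `<=` cyl ks.2 `&` ~` C ks.1.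
  move=> [k s]; have [|y [sy Cy]] := dC k (cyl s) _ (cyl_open s).
    by exists (nth false s); exact: cyl_nth.
  have [n yU] := open_cyl_nbhs (openI (cyl_open s) (closed_openC (cC k))) (conj sy Cy).
  by exists (restr y n).
pose sq := fix sq k := if k is k'.+1 then f (k', sq k') else [::].
have sq_dec m n : (m <= n)%N -> cyl (sq n) `<=` cyl (sq m).
  move=> /subnK <-; elim: (n - m)%N => // d IH z /= /fC[+ _]; exact: IH.
have [y sqy] : \bigcap_k cyl (sq k) !=set0.
  apply: compact_nested_closed cantor_space_compact _ sq_dec _ => k.
    exact: cyl_closed.
  by exists (nth false (sq k)); exact: cyl_nth.
by exists y => k; have /fC[] := sqy k.+1 I.
Qed.

Lemma dense_cyl (S : set cantor_space) :
  (forall s, exists2 z, cyl s z & S z) -> dense S.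
Proof.
move=> Scyl O [z Oz] oO; have [n zO] := open_cyl_nbhs oO Oz.
by have [w zw Sw] := Scyl (restr z n); exists w; split => //; exact: zO.
Qed.

Definition eventually_true : set cantor_space :=
  [set x | exists m, forall n, (m <= n)%N -> x n].

Lemma eventually_trueN x :
  ~ eventually_true x -> forall m, exists2 n, (m <= n)%N & ~~ x n.
Proof.
move=> Ex m; apply: contrapT => xm; apply: Ex; exists m => n mn.
by apply: contrapT => xn; apply: xm; exists n => //; apply/negP.
Qed.

Lemma eventually_true_not_Delta02 :
  ~ (Fsigma eventually_true /\ Fsigma (~` eventually_true)).
Proof.
move=> [[F cF EF] [G cG EG]].
have Fdense i : dense (~` F i).
  apply: dense_cyl => s; exists (nth false s); first exact: cyl_nth.
  move=> Fs; have [m sm] : eventually_true (nth false s) by rewrite EF; exists i.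
  by have := sm (maxn m (size s)) (leq_maxl _ _); rewrite nth_default ?leq_maxr.
have Gdense i : dense (~` G i).
  apply: dense_cyl => s; exists (nth true s); first exact: cyl_nth.
  have : (~` eventually_true) (nth true s) -> False.
    by apply; exists (size s) => n sn; rewrite nth_default.
  by rewrite EG => sE Gs; apply: sE; exists i.
pose C k := if odd k then G k./2 else F k./2.
have [|k|y Cy] := @cantor_baire C.
- by move=> k; rewrite /C; case: ifP.
- by rewrite /C; case: ifP.
have [Ey|Ey] := pselect (eventually_true y).
  by move: Ey; rewrite EF => -[i _ Fy]; apply: (Cy i.*2); rewrite /C odd_double doubleK.
have : (~` eventually_true) y by [].
by rewrite EG => -[i _ Gy]; apply: (Cy i.*2.+1); rewrite /C /= odd_double /= uphalf_double.
Qed.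

Section reduction.
Implicit Types x y w : cantor_space.

Definition zero_seq : cantor_space := fun=> false.

Definition first_one y n := y n /\ forall k, (k < n)%N -> ~~ y k.

Lemma first_one_unique y m n : first_one y m -> first_one y n -> m = n.
Proof.
by move=> [ym my] [yn ny]; case: (ltngtP m n) => // [/ny|/my]; rewrite ?ym ?yn.
Qed.

Lemma exists_first_one y k : y k -> exists2 n, (n <= k)%N & first_one y n.
Proof.
move=> yk; have [n yn minn] := ex_minnP (ex_intro (fun k => y k) k yk).
exists n; first exact: minn.
by split => // j jn; apply/negP => /minn; rewrite leqNgt jn.
Qed.

Lemma first_one_cyl y w n : first_one y n -> cyl (restr y n.+1) w -> first_one w n.
Proof.
move=> [yn ny] yw; split; first by rewrite (cyl_restr_nth yw).
by move=> k kn; rewrite (cyl_restr_nth yw (ltnW kn)) ny.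
Qed.

Lemma cyl_zero_first_one y n k :
  cyl (restr zero_seq n) y -> first_one y k -> (n <= k)%N.
Proof.
move=> zy [yk _]; rewrite leqNgt; apply/negP => kn.
by move: yk; rewrite (cyl_restr_nth zy kn).
Qed.

Definition first_one_set x : set cantor_space :=
  [set y | forall n, first_one y n -> x n].

Lemma first_one_set_zero x : first_one_set x zero_seq.
Proof. by move=> n []. Qed.

Lemma first_one_set_closed x : closed (first_one_set x).
Proof.
rewrite -openC; apply: cyl_nbhs_open => y /existsNP[n /not_implyP[yn xn]].
by exists n.+1 => w yw wx; apply/xn/wx/(first_one_cyl yn yw).
Qed.

Lemma first_one_set_compact x : compact (first_one_set x).
Proof.
exact: (subclosed_compact (@first_one_set_closed x) cantor_space_compact (@subsetT _ _)).
Qed.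

Definition first_one_cset x : compact_set := CompactSet (@first_one_set_compact x).

Lemma first_one_cset_continuous : continuous first_one_cset.
Proof.
apply: vietoris_continuous => -[[] U] /= oU; apply: cyl_nbhs_open => x /= xU.
  have [m zU] := open_cyl_nbhs oU (xU _ (first_one_set_zero x)).
  exists m => x' xx' y x'y.
  have [[k [km yk]]|noone] := pselect (exists k, (k < m)%N /\ y k).
    have [n nk yn] := exists_first_one yk; apply: xU => n' yn'.
    rewrite -(first_one_unique yn yn') -(cyl_restr_nth xx' (leq_ltn_trans nk km)).
    exact: x'y.
  apply: zU; apply/cylP => i; rewrite size_restr => im; rewrite nth_restr //.
  by apply/negbTE/negP => yi; apply: noone; exists i.
have [y [xy Uy]] := xU.
have [[k yk]|noone] := pselect (exists k, y k).
  have [n _ yn] := exists_first_one yk; exists n.+1 => x' xx' /=; exists y; split => //.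
  by move=> n' /(first_one_unique yn) <-; rewrite (cyl_restr_nth xx') //; exact: xy.
by exists 0%N => x' _; exists y; split => // n [yn _]; case: noone; exists n.
Qed.

Definition reduction x : X := (zero_seq, first_one_cset x).

Lemma reduction_continuous : continuous reduction.
Proof.
move=> x; apply: (@cvg_pair _ _ _ (nbhs x) (nbhs zero_seq) (nbhs (first_one_cset x))).
  exact: cvg_cst.
exact: first_one_cset_continuous.
Qed.

End reduction.

Section density_of_reduction.
Context {R : realType}.

Lemma density_ratio_reduction n x : @density_ratio R n (reduction x) =
  mu (first_one_set x `&` cyl (restr zero_seq n)) / cyl_mass (restr zero_seq n).
Proof. exact: density_ratioE. Qed.

Lemma density_reduction_eventually_true x :
  eventually_true x -> @density_map R (reduction x) = 1.
Proof.
move=> [m xm]; rewrite density_mapE; apply: limn_inf_eventually_cst.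
exists m => n mn; rewrite density_ratio_reduction.
have -> : first_one_set x `&` cyl (restr zero_seq n) = cyl (restr zero_seq n).
  apply/seteqP; split => [y []//|y zy]; split => // k yk.
  exact/xm/(leq_trans mn)/(cyl_zero_first_one zy yk).
by rewrite mu_cyl divff // gt_eqF ?cyl_mass_gt0.
Qed.

Lemma density_reduction_not_eventually_true x :
  ~ eventually_true x -> @density_map R (reduction x) <= 2^-1.
Proof.
move=> /eventually_trueN xfreq; rewrite density_mapE.
apply: limn_inf_le; first exact: density_ratio_bounded.
move=> m; have [n mn xn] := xfreq m; exists n => //.
rewrite density_ratio_reduction ler_pdivrMr ?cyl_mass_gt0 // mulrC.
rewrite -(cyl_mass_rcons _ (zero_seq n)) -restrS.
apply: mu_le_cyl => y [xy zy]; rewrite restrS cyl_rcons size_restr; split => //.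
apply/negbTE/negP => yn; move/negP: xn; apply; apply: xy; split => // k kn.
by rewrite (cyl_restr_nth zy kn).
Qed.

End density_of_reduction.

Section density_not_baire_class_1.
Context {R : realType}.

Lemma reduction_preimage_density_gt :
  reduction @^-1` [set p : X | 3 / 4 < @density_map R p] = eventually_true.
Proof.
apply/seteqP; split => x /=; last by move/(@density_reduction_eventually_true R) ->; lra.
apply: contraPP => /(@density_reduction_not_eventually_true R) xle.
by apply/negP; rewrite -leNgt; apply: le_trans xle _; lra.
Qed.

Lemma reduction_preimage_density_lt :
  reduction @^-1` [set p : X | @density_map R p < 3 / 4] = ~` eventually_true.
Proof.
apply/seteqP; split => x /=.
  by move=> + /(@density_reduction_eventually_true R) x1; rewrite x1; lra.
by move/(@density_reduction_not_eventually_true R) => xle; apply: le_lt_trans xle _; lra.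
Qed.

Lemma density_map_not_baire_class1 : ~ baire_class (X := X) 1 (@density_map R).
Proof.
move=> bc1; apply: eventually_true_not_Delta02; split.
  rewrite -reduction_preimage_density_gt; apply: Fsigma_preimage reduction_continuous _.
  by apply: Sigma0_2_Fsigma; exact: (bc1 _ (@open_gt R (3 / 4))).
rewrite -reduction_preimage_density_lt; apply: Fsigma_preimage reduction_continuous _.
by apply: Sigma0_2_Fsigma; exact: (bc1 _ (@open_lt R (3 / 4))).
Qed.

End density_not_baire_class_1.

Theorem corollary3p5 (R : realType) :
  baire_class (X := (cantor_space * compact_set)%type) 2 (@density_map R) /\
  ~ baire_class (X := (cantor_space * compact_set)%type) 1 (@density_map R).
Proof. by split; [exact: density_map_baire_class2|exact: density_map_not_baire_class1]. Qed.
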